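(* Let $G$ be a finite connected unweighted graph with graph distance $d$, and let $\delta$ be its four-points hyperbolicity constant. Then there exist four vertices $u_1,u_2,u_3,u_4$ such that $$d(u_1,u_3)+d(u_2,u_4)=\max\{d(u_1,u_2)+d(u_3,u_4),\ d(u_1,u_4)+d(u_2,u_3)\}+2\delta,$$ and such that for every $i\in\{1,2,3,4\}$ and every neighbor $w$ of $u_i$ we have $d(w,u_{i+2})\le d(u_i,u_{i+2})$, where indices are taken modulo $4$.
   Context: The four-points hyperbolicity constant of $G$ is the smallest $\delta\ge0$ such that for all vertices $a,b,c,e$: $d(a,b)+d(c,e)\le\max\{d(a,c)+d(b,e),\ d(a,e)+d(b,c)\}+2\delta$. *)

From mathcomp Require Import all_boot all_order all_algebra.
Set Implicit Arguments. Unset Strict Implicit. Unset Printing Implicit Defensive.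
Import Order.TTheory GRing.Theory Num.Theory.

Section Graph.
Variables (T : finType) (e : rel T).

Definition simple_graph : Prop := symmetric e /\ irreflexive e.

Definition connected_graph : Prop := forall x y : T, connect e x y.

Fixpoint ball (k : nat) (x : T) : {set T} :=
  match k with
  | 0 => [set x]
  | k'.+1 => ball k' x :|: [set y | [exists z in ball k' x, e z y]]
  end.

(* Graph distance: least k with y \in ball k x (k ranges over 0..#|T|-1,
   which suffices in a connected graph; returns #|T| if y is unreachable). *)
Definition gdist (x y : T) : nat :=
  find (fun k => y \in ball k x) (iota 0 #|T|).

Definition four_point (R : realFieldType) (delta : R) : Prop :=
  forall a b c f : T,
    ((gdist a b + gdist c f)%:R <=
      Num.max ((gdist a c + gdist b f)%:R) ((gdist a f + gdist b c)%:R)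
      + 2 * delta)%R.

Definition hyp_const (R : realFieldType) (delta : R) : Prop :=
  (0 <= delta)%R /\ four_point delta /\
  (forall d' : R, (0 <= d')%R -> four_point d' -> (delta <= d')%R).

End Graph.

From mathcomp Require Import all_boot all_order all_algebra.
From mathcomp Require Import zify lra.
Set Implicit Arguments. Unset Strict Implicit.
Import Order.TTheory GRing.Theory Num.Theory.

(* Among the quadruples (a, b, c, f) maximising the four-point excess
   d(a,b) + d(c,f) - max(d(a,c) + d(b,f), d(a,f) + d(b,c)), whose maximum is
   2 delta, pick one that also maximises d(a,b) + d(c,f).  Moving a to a
   neighbour w with d(w,b) > d(a,b) raises d(a,b) by one and each term of the
   maximum by at most one, so it keeps the excess maximal while increasing
   d(a,b) + d(c,f): impossible.  The same holds for b, c and f by the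
   symmetries of the excess. *)

Section Distance.
Variables (T : finType) (e : rel T).

Lemma ball_center k x : x \in ball e k x.
Proof. by elim: k => [|k IH] /=; rewrite ?in_setU ?IH ?inE. Qed.

Lemma ball_edge k x y w : y \in ball e k x -> e y w -> w \in ball e k.+1 x.
Proof.
move=> yk eyw /=; rewrite in_setU inE; apply/orP; right.
by apply/existsP; exists y; rewrite yk.
Qed.

Lemma ball_trans k l x y z :
  z \in ball e k x -> y \in ball e l z -> y \in ball e (k + l) x.
Proof.
move=> zk; elim: l y => [|l IH] y /=; first by rewrite addn0 inE => /eqP ->.
rewrite addnS in_setU => /orP [yl|]; first by rewrite /= in_setU IH.
by rewrite inE => /existsP [w /andP [wl ewy]]; apply: ball_edge (IH _ wl) ewy.
Qed.

Lemma gdist_le_card x y : (gdist e x y <= #|T|)%N.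
Proof.
by have := find_size (fun k => y \in ball e k x) (iota 0 #|T|); rewrite size_iota.
Qed.

Lemma gdist_le k x y : y \in ball e k x -> (gdist e x y <= k)%N.
Proof.
move=> yk; case: (leqP #|T| k) => [/(leq_trans (gdist_le_card x y))//|kT].
by rewrite leqNgt; apply/negP => /(before_find 0); rewrite nth_iota // add0n yk.
Qed.

Lemma mem_ball_gdist x y : (gdist e x y < #|T|)%N -> y \in ball e (gdist e x y) x.
Proof.
move=> lt_dT; have reach : has (fun k => y \in ball e k x) (iota 0 #|T|).
  by rewrite has_find size_iota.
by have := nth_find 0 reach; rewrite nth_iota // add0n.
Qed.

Lemma gdistxx x : gdist e x x = 0%N.
Proof. by apply/eqP; rewrite -leqn0; apply: gdist_le (ball_center 0 x). Qed.

(* No connectivity is needed: distances are capped at #|T|. *)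
Lemma gdist_edge x y w : e y w -> (gdist e x w <= (gdist e x y).+1)%N.
Proof.
move=> eyw; case: (ltnP (gdist e x y) #|T|) => [lt_dT|ge_dT].
  exact: gdist_le (ball_edge (mem_ball_gdist lt_dT) eyw).
exact: leq_trans (gdist_le_card x w) (leqW ge_dT).
Qed.

Hypothesis e_sym : symmetric e.

Lemma ball_sym k x y : y \in ball e k x -> x \in ball e k y.
Proof.
elim: k x y => [|k IH] x y /=; first by rewrite !inE => /eqP ->.
rewrite in_setU => /orP [yk|]; first by rewrite in_setU IH.
rewrite inE => /existsP [z /andP [zk ezy]].
have y1z : z \in ball e 1 y by apply: (ball_edge (ball_center 0 y)); rewrite e_sym.
exact: ball_trans y1z (IH _ _ zk).
Qed.

Lemma gdistC x y : gdist e x y = gdist e y x.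
Proof. by apply: eq_find => k; apply/idP/idP; apply: ball_sym. Qed.

Lemma gdist_edge_l x y w : e y w -> (gdist e w x <= (gdist e y x).+1)%N.
Proof. by move=> eyw; rewrite gdistC (gdistC y); apply: gdist_edge. Qed.

End Distance.

Local Open Scope ring_scope.

Section FourPointExcess.
Variables (T : finType) (e : rel T).
Local Notation d := (gdist e).

Definition pair_sum (a b c f : T) : nat := (d a b + d c f)%N.

Definition fp_excess (a b c f : T) : int :=
  (pair_sum a b c f)%:Z - (maxn (pair_sum a c b f) (pair_sum a f b c))%:Z.

Lemma four_pointE (R : realFieldType) (delta : R) :
  four_point e delta <-> forall a b c f, (fp_excess a b c f)%:~R <= 2 * delta.
Proof.
have excessE a b c f : (fp_excess a b c f)%:~R =
    (pair_sum a b c f)%:R - (maxn (pair_sum a c b f) (pair_sum a f b c))%:R :> R.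
  by rewrite intrB.
split=> fp a b c f; have := fp a b c f; rewrite ?excessE /pair_sum -natr_max maxEnat; lra.
Qed.

Definition excess_maximal (a b c f : T) : Prop :=
  forall a' b' c' f', fp_excess a' b' c' f' <= fp_excess a b c f.

Definition optimal_quadruple (a b c f : T) : Prop :=
  excess_maximal a b c f /\
  forall a' b' c' f', fp_excess a' b' c' f' = fp_excess a b c f ->
    (pair_sum a' b' c' f' <= pair_sum a b c f)%N.

Lemma excess_maximal_ge0 a b c f : excess_maximal a b c f -> 0 <= fp_excess a b c f.
Proof.
by move/(_ a a a a); rewrite /fp_excess /pair_sum !gdistxx maxnn subrr.
Qed.

Lemma hyp_const_excess (R : realFieldType) (delta : R) a b c f :
  hyp_const e delta -> excess_maximal a b c f ->
  2 * delta = (fp_excess a b c f)%:~R.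
Proof.
move=> [delta_ge0 [/four_pointE fp_delta delta_min]] maxq.
have excess_ge0 : 0 <= (fp_excess a b c f)%:~R :> R.
  by rewrite ler0z excess_maximal_ge0.
have : delta <= (fp_excess a b c f)%:~R / 2.
  apply: delta_min; first by rewrite divr_ge0.
  apply/four_pointE => a' b' c' f'.
  by rewrite mulrC divfK ?pnatr_eq0 // ler_int maxq.
have := fp_delta a b c f; lra.
Qed.

Lemma exists_optimal_quadruple : T -> exists a b c f, optimal_quadruple a b c f.
Proof.
move=> x0; pose excess (q : T * T * T * T) := fp_excess q.1.1.1 q.1.1.2 q.1.2 q.2.
pose psum (q : T * T * T * T) := pair_sum q.1.1.1 q.1.1.2 q.1.2 q.2.
have [qm _ maxqm] := @arg_maxP _ _ _ (x0, x0, x0, x0) xpredT excess isT.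
have [[[[a b] c] f] /eqP excess_q maxq] :=
  @arg_maxnP _ qm (fun q => excess q == excess qm) psum (eqxx _).
exists a, b, c, f; split=> [a' b' c' f'|a' b' c' f' eq_excess].
  by have -> : fp_excess a b c f = excess qm := excess_q; apply: (maxqm (a', b', c', f')).
by apply: (maxq (a', b', c', f')); apply/eqP; exact: etrans eq_excess excess_q.
Qed.

Hypothesis e_sym : symmetric e.

Lemma optimal_quadruple_swap a b c f :
  optimal_quadruple a b c f -> optimal_quadruple b a f c.
Proof.
have excessE x y z t : fp_excess y x t z = fp_excess x y z t.
  by rewrite /fp_excess /pair_sum (gdistC e_sym y x) (gdistC e_sym t z); lia.
have sumE x y z t : pair_sum y x t z = pair_sum x y z t.
  by rewrite /pair_sum (gdistC e_sym y x) (gdistC e_sym t z).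
move=> [maxq maxs]; split=> [a' b' c' f'|a' b' c' f'].
  by rewrite (excessE b' a' f' c') (excessE a b c f); apply: maxq.
rewrite (excessE b' a' f' c') (excessE a b c f) => /maxs.
by rewrite (sumE b' a' f' c') (sumE a b c f).
Qed.

Lemma optimal_quadruple_flip a b c f :
  optimal_quadruple a b c f -> optimal_quadruple c f a b.
Proof.
have excessE x y z t : fp_excess z t x y = fp_excess x y z t.
  rewrite /fp_excess /pair_sum (gdistC e_sym z x) (gdistC e_sym t y).
  by rewrite (gdistC e_sym z y) (gdistC e_sym t x); lia.
have sumE x y z t : pair_sum z t x y = pair_sum x y z t by rewrite /pair_sum addnC.
move=> [maxq maxs]; split=> [a' b' c' f'|a' b' c' f'].
  by rewrite (excessE c' f' a' b') (excessE a b c f); apply: maxq.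
rewrite (excessE c' f' a' b') (excessE a b c f) => /maxs.
by rewrite (sumE c' f' a' b') (sumE a b c f).
Qed.

Lemma optimal_quadruple_far a b c f :
  optimal_quadruple a b c f -> forall w, e a w -> (d w b <= d a b)%N.
Proof.
move=> [maxq maxs] w eaw; rewrite leqNgt; apply/negP => far_wb.
have wc := gdist_edge_l e_sym c eaw; have wf := gdist_edge_l e_sym f eaw.
have excess_w : fp_excess w b c f = fp_excess a b c f.
  apply/eqP; rewrite eq_le maxq /=.
  by move: far_wb wc wf; rewrite /fp_excess /pair_sum; lia.
by have := maxs _ _ _ _ excess_w; rewrite /pair_sum; lia.
Qed.

End FourPointExcess.

Theorem mainTheorem5 (R : realFieldType) (T : finType) (e : rel T)
  (x0 : T) (Hsimple : simple_graph e) (Hconn : connected_graph e)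
  (delta : R) (Hdelta : hyp_const e delta) :
  exists u1 u2 u3 u4 : T,
    (gdist e u1 u3 + gdist e u2 u4)%:R =
      Num.max ((gdist e u1 u2 + gdist e u3 u4)%:R)
              ((gdist e u1 u4 + gdist e u2 u3)%:R) + 2 * delta
    /\ (forall w, e u1 w -> (gdist e w u3 <= gdist e u1 u3)%N)
    /\ (forall w, e u2 w -> (gdist e w u4 <= gdist e u2 u4)%N)
    /\ (forall w, e u3 w -> (gdist e w u1 <= gdist e u3 u1)%N)
    /\ (forall w, e u4 w -> (gdist e w u2 <= gdist e u4 u2)%N).
Proof.
have e_sym : symmetric e := Hsimple.1.
have [u1 [u3 [u2 [u4 opt]]]] := exists_optimal_quadruple e x0.
have opt3 := optimal_quadruple_swap e_sym opt.
have opt2 := optimal_quadruple_flip e_sym opt.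
have opt4 := optimal_quadruple_swap e_sym opt2.
exists u1, u2, u3, u4; split; last first.
  split; first exact: (optimal_quadruple_far e_sym opt).
  split; first exact: (optimal_quadruple_far e_sym opt2).
  split; first exact: (optimal_quadruple_far e_sym opt3).
  exact: (optimal_quadruple_far e_sym opt4).
rewrite (hyp_const_excess Hdelta opt.1) /fp_excess /pair_sum intrB -natr_max maxEnat.
by rewrite (gdistC e_sym u3 u2) addrC subrK.
Qed.
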